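(* Let $G=(V,E)$ be a connected simple undirected graph and $c\in\mathbb{R}^n$ a vector with strictly positive components satisfying $\sum_{j\in S}c_j^2=\sum_{j\in N(S)}c_j^2$ for every $S\in\mathcal{S}_1$. Let $\mathcal{F}$ be the family of sets $S\in\mathcal{S}_2$ such that (a) there is no partition $S=S'\cup S''$ of $S$ into two nonempty disjoint sets with $N(S')\cap N(S'')=\emptyset$, and (b) there is no stable set $S'$ with $S\subsetneq S'$ and $N(S')=N(S)$. Then $\sum_{j\in S}c_j^2<\sum_{j\in N(S)}c_j^2$ holds for every $S\in\mathcal{S}_2$ if and only if it holds for every $S\in\mathcal{F}$.
   Context: For $S\subseteq V$, $N(S)=\{j\in V\setminus S:\ \exists\, i\in S \text{ with } \{i,j\}\in E\}$. A set $S\subseteq V$ is stable if no two elements of $S$ are joined by an edge. $\mathcal{S}_1$ is the family of nonempty stable sets $S\subseteq V$ such that there is no edge $\{k,\ell\}\in E$ with $k\notin S$ and $\ell\notin S$; $\mathcal{S}_2$ is the family of nonempty stable sets $S\subseteq V$ such that there exists an edge $\{k,\ell\}\in E$ with $k\notin S$ and $\ell\notin S$. *)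

From mathcomp Require Import all_boot all_order all_algebra.
From mathcomp Require Import reals.
Set Implicit Arguments. Unset Strict Implicit. Unset Printing Implicit Defensive.
Import Order.TTheory GRing.Theory Num.Theory.
Local Open Scope ring_scope.

Definition simple_graph (n : nat) (e : rel 'I_n) : Prop :=
  irreflexive e /\ symmetric e.

Definition connected_graph (n : nat) (e : rel 'I_n) : Prop :=
  forall i j : 'I_n, connect e i j.

Definition nbh (n : nat) (e : rel 'I_n) (S : {set 'I_n}) : {set 'I_n} :=
  [set j | (j \notin S) && [exists i in S, e i j]].

Definition stable (n : nat) (e : rel 'I_n) (S : {set 'I_n}) : bool :=
  [forall i in S, forall j in S, ~~ e i j].

Definition inS1 (n : nat) (e : rel 'I_n) (S : {set 'I_n}) : bool :=
  [&& S != set0, stable e S &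
      ~~ [exists k, exists l, [&& e k l, k \notin S & l \notin S]]].

Definition inS2 (n : nat) (e : rel 'I_n) (S : {set 'I_n}) : bool :=
  [&& S != set0, stable e S &
      [exists k, exists l, [&& e k l, k \notin S & l \notin S]]].

Definition inF (n : nat) (e : rel 'I_n) (S : {set 'I_n}) : Prop :=
  inS2 e S /\
  (~ exists S' S'' : {set 'I_n},
        [/\ S' != set0, S'' != set0, [disjoint S' & S''], S' :|: S'' = S &
            nbh e S' :&: nbh e S'' = set0]) /\
  (~ exists S' : {set 'I_n},
        [/\ stable e S', S \proper S' & nbh e S' = nbh e S]).

Definition sumsq (R : realType) (n : nat) (c : 'I_n -> R) (S : {set 'I_n}) : R :=
  \sum_(j in S) c j ^+ 2.

From mathcomp Require Import all_boot all_order all_algebra.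
From mathcomp Require Import reals.
From Stdlib Require Import Classical.
Import Order.TTheory GRing.Theory Num.Theory.
Set Implicit Arguments. Unset Strict Implicit. Unset Printing Implicit Defensive.
Local Open Scope ring_scope.

(* Induction on S in S2, ordered first by |N(S)| and then by decreasing |S|.
   If S is not in F, either S = S' + S'' with N(S) the disjoint union of
   N(S') and N(S''), and both sums split, the pieces having smaller
   neighbourhoods; or S is strictly contained in a stable S' with the same
   neighbourhood, and then c(S) < c(S') <= c(N(S')) = c(N(S)), using the
   hypothesis on S1 or the induction hypothesis according to whether S' lies
   in S1 or S2. Connectedness guarantees N(S') and N(S'') are nonempty. *)

Section SumOfSquares.
Variables (R : realType) (n : nat) (c : 'I_n -> R).
Hypothesis c_gt0 : forall j, 0 < c j.

Lemma sumsqU (A B : {set 'I_n}) :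
  [disjoint A & B] -> sumsq c (A :|: B) = sumsq c A + sumsq c B.
Proof. by move=> dAB; rewrite /sumsq -bigU //; apply: eq_bigl => i; rewrite !inE. Qed.

Lemma sumsq_gt0 (A : {set 'I_n}) : A != set0 -> 0 < sumsq c A.
Proof.
move=> /set0Pn[a aA]; rewrite /sumsq (big_setD1 a aA) /=.
apply: ltr_pwDl; first by rewrite exprn_gt0.
by apply: sumr_ge0 => i _; rewrite exprn_ge0 // ltW.
Qed.

Lemma sumsq_proper (A B : {set 'I_n}) : A \proper B -> sumsq c A < sumsq c B.
Proof.
move=> /andP[sAB nsBA].
rewrite -(setID B A) (setIidPr sAB) sumsqU; last first.
  by rewrite -setI_eq0 setDE setICA setICr setI0.
by rewrite ltrDl sumsq_gt0 // setD_eq0.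
Qed.

End SumOfSquares.

Section Neighbourhoods.
Variables (n : nat) (e : rel 'I_n).

Lemma stableP (S : {set 'I_n}) i j : stable e S -> i \in S -> j \in S -> ~~ e i j.
Proof. by move=> /forall_inP/(_ i) + iS jS => /(_ iS)/forall_inP/(_ j jS). Qed.

Lemma stableS {S T : {set 'I_n}} : T \subset S -> stable e S -> stable e T.
Proof.
move=> sTS stS; apply/forall_inP=> i iT; apply/forall_inP=> j jT.
by apply: stableP stS _ _; apply: (subsetP sTS).
Qed.

Lemma nbhS {S T : {set 'I_n}} :
  T \subset S -> stable e S -> nbh e T \subset nbh e S.
Proof.
move=> sTS stS; apply/subsetP=> j; rewrite !inE => /andP[_ /exists_inP[i iT eij]].
have iS := subsetP sTS i iT.
rewrite (introT exists_inP (ex_intro2 _ _ i iS eij)) andbT.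
by apply: contraL eij => jS; apply: stableP stS iS jS.
Qed.

Lemma nbhU (A B : {set 'I_n}) :
  stable e (A :|: B) -> nbh e (A :|: B) = nbh e A :|: nbh e B.
Proof.
move=> stAB; apply/eqP; rewrite eqEsubset subUset.
rewrite (nbhS (subsetUl A B) stAB) (nbhS (subsetUr A B) stAB); apply/andP; split=> //.
apply/subsetP=> j; rewrite !inE negb_or.
case/andP=> /andP[jA jB] /exists_inP[i]; rewrite inE => /orP[] iX eij.
- by rewrite jA (introT exists_inP (ex_intro2 _ _ i iX eij)).
- by rewrite jB (introT exists_inP (ex_intro2 _ _ i iX eij)) orbT.
Qed.

Lemma inS2S (S T : {set 'I_n}) :
  T \subset S -> T != set0 -> inS2 e S -> inS2 e T.
Proof.
move=> sTS T0 /and3P[_ stS /existsP[k /existsP[l /and3P[ekl kS lS]]]].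
rewrite /inS2 T0 (stableS sTS stS); apply/existsP; exists k; apply/existsP; exists l.
by rewrite ekl !(contra (subsetP sTS _)).
Qed.

Lemma inS1_or_inS2 (S : {set 'I_n}) :
  S != set0 -> stable e S -> inS1 e S \/ inS2 e S.
Proof. by rewrite /inS1 /inS2 => -> ->; case: [exists k, _]; [right | left]. Qed.

(* An S in S2 leaves a vertex outside; a path to it must exit S through N(S). *)
Lemma nbh_neq0 (S : {set 'I_n}) :
  symmetric e -> connected_graph e -> inS2 e S -> nbh e S != set0.
Proof.
move=> sym con /and3P[/set0Pn[b bS] _ /existsP[k /existsP[l /and3P[_ kS _]]]].
apply: contraNN kS => /eqP N0.
have exit_nbh x y : e x y -> x \in S -> y \in S.
  move=> exy xS; apply: contraT => yS.
  suff : y \in nbh e S by rewrite N0 inE.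
  by rewrite inE yS; apply/exists_inP; exists x.
have clS : closed e (mem S).
  by move=> x y exy; apply/idP/idP; apply: exit_nbh; rewrite // sym.
by rewrite -(closed_connect clS (con b k)).
Qed.

(* Lexicographic in (|N(S)|, n - |S|), since n - |S| < n.+1. *)
Definition nbh_measure (S : {set 'I_n}) : nat := #|nbh e S| * n.+1 + (n - #|S|).

Lemma nbh_measure_lt_nbh (S T : {set 'I_n}) :
  (#|nbh e T| < #|nbh e S|)%N -> (nbh_measure T < nbh_measure S)%N.
Proof.
rewrite /nbh_measure => ltTS; apply: (@leq_trans (#|nbh e T|.+1 * n.+1)).
  by rewrite mulSn addnC ltn_add2r ltnS leq_subr.
by rewrite (leq_trans _ (leq_addr _ _)) // leq_mul2r ltTS orbT.
Qed.

Lemma nbh_measure_lt_card (S T : {set 'I_n}) :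
  nbh e T = nbh e S -> (#|S| < #|T|)%N -> (nbh_measure T < nbh_measure S)%N.
Proof.
rewrite /nbh_measure => -> ltST; rewrite ltn_add2l ltn_sub2l //.
by apply: leq_trans ltST _; rewrite -[n in (_ <= n)%N]card_ord max_card.
Qed.

End Neighbourhoods.

Section Reduction.
Variables (R : realType) (n : nat) (e : rel 'I_n) (c : 'I_n -> R).
Hypotheses (c_gt0 : forall j, 0 < c j)
  (eqS1 : forall S : {set 'I_n}, inS1 e S -> sumsq c S = sumsq c (nbh e S)).

Lemma sumsq_nbh_ltU (A B : {set 'I_n}) :
  stable e (A :|: B) -> [disjoint A & B] -> [disjoint nbh e A & nbh e B] ->
  sumsq c A < sumsq c (nbh e A) -> sumsq c B < sumsq c (nbh e B) ->
  sumsq c (A :|: B) < sumsq c (nbh e (A :|: B)).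
Proof. by move=> stAB dAB dN ltA ltB; rewrite nbhU // !sumsqU // ltrD. Qed.

Lemma sumsq_nbh_lt_proper (S T : {set 'I_n}) :
  S != set0 -> stable e T -> S \proper T -> nbh e T = nbh e S ->
  (inS2 e T -> sumsq c T < sumsq c (nbh e T)) ->
  sumsq c S < sumsq c (nbh e S).
Proof.
move=> S0 stT ltST <- ltT; apply: lt_le_trans (sumsq_proper c_gt0 ltST) _.
have T0 : T != set0 by apply: contraNneq S0 => T0; rewrite -subset0 -T0 proper_sub.
by case: (inS1_or_inS2 T0 stT) => [/eqS1 -> | /ltT/ltW].
Qed.

End Reduction.

Theorem mainTheorem2 (R : realType) (n : nat) (e : rel 'I_n) (c : 'I_n -> R) :
  simple_graph e -> connected_graph e ->
  (forall j, 0 < c j) ->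
  (forall S : {set 'I_n}, inS1 e S -> sumsq c S = sumsq c (nbh e S)) ->
  ((forall S : {set 'I_n}, inS2 e S -> sumsq c S < sumsq c (nbh e S)) <->
   (forall S : {set 'I_n}, inF e S -> sumsq c S < sumsq c (nbh e S))).
Proof.
move=> [_ sym] con c_gt0 eqS1; split=> [ltS2 S [/ltS2] //| ltF S].
have [k] := ubnP (nbh_measure e S); elim: k S => // k IHk S; rewrite ltnS => leSk S2.
have /and3P[S0 stS _] := S2.
case: (classic (exists S' S'' : {set 'I_n},
        [/\ S' != set0, S'' != set0, [disjoint S' & S''], S' :|: S'' = S &
            nbh e S' :&: nbh e S'' = set0])) => [[A [B [A0 B0 dAB defS dN]]]|noSplit].
  rewrite -defS in stS S2 leSk *.
  have cardN : #|nbh e (A :|: B)| = (#|nbh e A| + #|nbh e B|)%N.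
    by rewrite nbhU // cardsU dN cards0 subn0.
  have S2A : inS2 e A by apply: inS2S S2; rewrite ?subsetUl.
  have S2B : inS2 e B by apply: inS2S S2; rewrite ?subsetUr.
  have IH X : inS2 e X -> (#|nbh e X| < #|nbh e (A :|: B)|)%N ->
      sumsq c X < sumsq c (nbh e X).
    by move=> S2X ltX; apply: IHk S2X; apply: leq_trans (nbh_measure_lt_nbh ltX) leSk.
  apply: sumsq_nbh_ltU; rewrite // -?setI_eq0 ?dN //; apply: IH => //.
    by rewrite cardN -addn1 leq_add2l card_gt0 nbh_neq0.
  by rewrite cardN -add1n leq_add2r card_gt0 nbh_neq0.
case: (classic (exists S' : {set 'I_n},
        [/\ stable e S', S \proper S' & nbh e S' = nbh e S])) => [[T [stT ltST NT]]|noExt].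
  apply: (sumsq_nbh_lt_proper c_gt0 eqS1 S0 stT ltST NT) => S2T.
  by apply: IHk S2T; apply: leq_trans (nbh_measure_lt_card NT (proper_card ltST)) leSk.
by apply: ltF; split=> //; split.
Qed.
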